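(* Let $\kappa$ be an uncountable cardinal with $\kappa=\kappa^{<\kappa}$. Then there is a sequence $\langle A_\gamma\subseteq{}^\kappa\kappa : \gamma<2^\kappa\rangle$ of pairwise disjoint sets, each of which is the image of ${}^\kappa\kappa$ under a continuous injective function ${}^\kappa\kappa\to{}^\kappa\kappa$, such that for all $\gamma<\delta<2^\kappa$ the sets $A_\gamma$ and $A_\delta$ cannot be separated by a set with the $\kappa$-Baire property, i.e. there is no $X\subseteq{}^\kappa\kappa$ with the $\kappa$-Baire property such that $A_\gamma\subseteq X\subseteq{}^\kappa\kappa\setminus A_\delta$.
   Context: ${}^\kappa\kappa$ is the set of functions $\kappa\to\kappa$, with the topology whose basic open sets are $N_s=\{x\in{}^\kappa\kappa : s\subseteq x\}$ for $s$ a function from some ordinal $\alpha<\kappa$ to $\kappa$. A subset $A$ of ${}^\kappa\kappa$ has the $\kappa$-Baire property if there is an open set $U\subseteq{}^\kappa\kappa$ and a sequence $\langle N_\alpha:\alpha<\kappa\rangle$ of nowhere dense subsets of ${}^\kappa\kappa$ such that the symmetric difference of $A$ and $U$ is contained in $\bigcup_{\alpha<\kappa}N_\alpha$. *)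

(* The cardinal kappa is modelled as a type K carrying a strict
   well-order [lt] of order type kappa (elements of K = ordinals < kappa). *)
From Stdlib Require Import Relations Wellfounded.

Definition set (T : Type) := T -> Prop.

Definition strict_well_order {K : Type} (lt : K -> K -> Prop) : Prop :=
  (forall x, ~ lt x x) /\
  (forall x y z, lt x y -> lt y z -> lt x z) /\
  (forall x y, lt x y \/ x = y \/ lt y x) /\
  well_founded lt.

(* the order type is a cardinal: no proper initial segment {y | y < a}
   has the same size as K (equivalently, K does not inject into it) *)
Definition is_cardinal_order {K : Type} (lt : K -> K -> Prop) : Prop :=
  forall a : K, ~ exists f : K -> K,
      (forall x y, f x = f y -> x = y) /\ (forall x, lt (f x) a).

Definition uncountable (K : Type) : Prop :=
  ~ exists f : K -> nat, forall x y, f x = f y -> x = y.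

(* kappa^{<kappa} <= kappa (hence = kappa): the set of all functions
   s : alpha -> kappa with alpha < kappa injects into kappa.  Such an s is
   represented by a pair (a, t) with t : K -> K, two pairs representing the
   same s iff a = a' and t, t' agree below a. *)
Definition kappa_lt_kappa_le_kappa {K : Type} (lt : K -> K -> Prop) : Prop :=
  exists phi : K -> (K -> K) -> K,
    forall a t a' t', phi a t = phi a' t' ->
      a = a' /\ (forall y, lt y a -> t y = t' y).

(* basic open set N_s for s = t restricted to {y | y < a} *)
Definition basic_open {K : Type} (lt : K -> K -> Prop) (a : K) (t : K -> K)
  : set (K -> K) :=
  fun x => forall y, lt y a -> x y = t y.

Definition is_open {K : Type} (lt : K -> K -> Prop) (U : set (K -> K)) : Prop :=
  forall x, U x -> exists a t, basic_open lt a t x /\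
      (forall z, basic_open lt a t z -> U z).

Definition closure {K : Type} (lt : K -> K -> Prop) (N : set (K -> K))
  : set (K -> K) :=
  fun x => forall U, is_open lt U -> U x -> exists z, U z /\ N z.

Definition nowhere_dense {K : Type} (lt : K -> K -> Prop) (N : set (K -> K))
  : Prop :=
  forall U, is_open lt U -> (forall z, U z -> closure lt N z) ->
    forall z, ~ U z.

Definition kappa_Baire {K : Type} (lt : K -> K -> Prop) (A : set (K -> K))
  : Prop :=
  exists (U : set (K -> K)) (N : K -> set (K -> K)),
    is_open lt U /\ (forall a, nowhere_dense lt (N a)) /\
    (forall x, ((A x /\ ~ U x) \/ (U x /\ ~ A x)) -> exists a, N a x).

Definition continuous {K : Type} (lt : K -> K -> Prop)
  (f : (K -> K) -> (K -> K)) : Prop :=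
  forall V, is_open lt V -> is_open lt (fun x => V (f x)).

From Stdlib Require Import Classical ClassicalEpsilon FunctionalExtensionality PropExtensionality Arith.

(* Each x : K -> K generates a club: starting from bottom, the second coordinate
   of x d proposes the next point after d.  At the club points d above bottom,
   embed g x records a code of the sequence of pairs (g b, x b), b < d; off the
   club it copies x.  Since kappa^{<kappa} = kappa makes kappa regular, and kappa
   is uncountable, two such clubs meet unboundedly, so embed g x determines g and x: the images A_g of the continuous
   injections embed g are pairwise disjoint.  Because x can steer its club so that
   embed g x copies x on long intervals, a construction of length kappa finds in
   every basic open set a point of A_g outside any kappa given nowhere dense sets.
   So if X differs from an open U by such sets, X meets A_g' when U is nonempty
   and misses a point of A_g when U is empty. *)

Local Notation dec := excluded_middle_informative.

Section GeneralizedBaireSpace.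

Variables (K : Type) (lt : K -> K -> Prop).
Hypothesis lt_swo : strict_well_order lt.

Lemma lt_irrefl x : ~ lt x x.
Proof. apply lt_swo. Qed.

Lemma lt_trans x y z : lt x y -> lt y z -> lt x z.
Proof. apply lt_swo. Qed.

Lemma lt_trichotomy x y : lt x y \/ x = y \/ lt y x.
Proof. apply lt_swo. Qed.

Lemma lt_wf : well_founded lt.
Proof. apply lt_swo. Qed.

Definition le x y := lt x y \/ x = y.

Lemma le_lt_trans x y z : le x y -> lt y z -> lt x z.
Proof. intros [H| ->] Hyz; [exact (lt_trans _ _ _ H Hyz) | exact Hyz]. Qed.

Lemma lt_le_trans x y z : lt x y -> le y z -> lt x z.
Proof. intros Hxy [H| <-]; [exact (lt_trans _ _ _ Hxy H) | exact Hxy]. Qed.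

Lemma le_trans x y z : le x y -> le y z -> le x z.
Proof. intros Hxy [H| <-]; [left; exact (le_lt_trans _ _ _ Hxy H) | exact Hxy]. Qed.

Lemma not_lt_le x y : ~ lt x y -> le y x.
Proof.
  intros H. destruct (lt_trichotomy x y) as [Hxy|[->|Hyx]];
    [contradiction | right; reflexivity | left; exact Hyx].
Qed.

Lemma le_not_lt x y : le x y -> ~ lt y x.
Proof. intros Hxy Hyx. exact (lt_irrefl _ (le_lt_trans _ _ _ Hxy Hyx)). Qed.

Lemma le_antisym x y : le x y -> le y x -> x = y.
Proof. intros [Hxy| ->] Hyx; [exact (False_ind _ (le_not_lt _ _ Hyx Hxy)) | reflexivity]. Qed.

Lemma exists_le_both x y : exists z, le x z /\ le y z.
Proof.
  destruct (lt_trichotomy x y) as [H|[<-|H]].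
  - exists y. split; [left; exact H | right; reflexivity].
  - exists x. split; right; reflexivity.
  - exists x. split; [right; reflexivity | left; exact H].
Qed.

Lemma least_exists (P : K -> Prop) :
  (exists x, P x) -> exists x, P x /\ forall y, P y -> ~ lt y x.
Proof.
  intros [x Hx]. induction x as [x IH] using (well_founded_ind lt_wf).
  destruct (classic (exists y, P y /\ lt y x)) as [[y [Hy Hyx]]|Hmin].
  - exact (IH y Hyx Hy).
  - exists x. split; [exact Hx|]. intros y Hy Hyx. apply Hmin. eauto.
Qed.

Definition upper_bound (D : K -> Prop) (b : K) := forall x, D x -> le x b.

Definition is_sup (D : K -> Prop) (s : K) :=
  upper_bound D s /\ forall b, upper_bound D b -> le s b.

Lemma sup_exists D : (exists b, upper_bound D b) -> exists s, is_sup D s.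
Proof.
  intros Hb. destruct (least_exists _ Hb) as [s [Hs Hmin]].
  exists s. split; [exact Hs|]. intros b Hb'. apply not_lt_le. exact (Hmin b Hb').
Qed.

Lemma lt_sup D s b : is_sup D s -> lt b s -> exists x, D x /\ lt b x.
Proof.
  intros [_ Hleast] Hbs. apply NNPP. intros Hno.
  assert (Hub : upper_bound D b).
  { intros x Hx. apply not_lt_le. intros Hbx. apply Hno. eauto. }
  exact (le_not_lt _ _ (Hleast b Hub) Hbs).
Qed.

Definition closed (C : K -> Prop) :=
  forall a, (exists c, C c /\ lt c a) ->
    (forall b, lt b a -> exists c, C c /\ lt b c /\ lt c a) -> C a.

Definition unbounded (C : K -> Prop) := forall b, exists c, lt b c /\ C c.

Lemma closed_sup C D s :
  closed C -> (forall x, D x -> C x) -> (exists x, D x) -> is_sup D s -> C s.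
Proof.
  intros HC HDC [x0 Hx0] Hs.
  destruct (classic (D s)) as [HDs|HDs]; [exact (HDC s HDs)|].
  assert (Hbelow : forall x, D x -> lt x s).
  { intros x Hx. destruct (proj1 Hs x Hx) as [H| ->]; [exact H | contradiction]. }
  apply HC.
  - exists x0. auto.
  - intros b Hb. destruct (lt_sup D s b Hs Hb) as [x [Hx Hbx]]. exists x. auto.
Qed.

Lemma wf_recursion {A : Type} (a0 : A) (F : (K -> A) -> K -> A) :
  (forall f f' j, (forall i, lt i j -> f i = f' i) -> F f j = F f' j) ->
  exists S : K -> A, forall j, S j = F S j.
Proof.
  intros HF.
  pose (F' := fun j (rec : forall i, lt i j -> A) =>
    F (fun i => match dec (lt i j) with left h => rec i h | right _ => a0 end) j).
  exists (Fix lt_wf (fun _ => A) F'). intros j.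
  rewrite Fix_eq.
  - unfold F'. apply HF. intros i Hi. destruct (dec (lt i j)); [reflexivity | contradiction].
  - intros j' r r' Hr. unfold F'. f_equal. extensionality i. destruct (dec (lt i j')); auto.
Qed.

Lemma basic_open_trans a x y z :
  basic_open lt a x y -> basic_open lt a y z -> basic_open lt a x z.
Proof. intros Hxy Hyz w Hw. rewrite Hyz, Hxy; auto. Qed.

Lemma basic_open_sym a x y : basic_open lt a x y -> basic_open lt a y x.
Proof. intros Hxy w Hw. symmetry. exact (Hxy w Hw). Qed.

Lemma basic_open_mono a b x y : le a b -> basic_open lt b x y -> basic_open lt a x y.
Proof. intros Hab Hxy w Hw. exact (Hxy w (lt_le_trans _ _ _ Hw Hab)). Qed.

Lemma basic_open_is_open a t : is_open lt (basic_open lt a t).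
Proof. intros x Hx. exists a, t. auto. Qed.

Section Kappa.

Hypothesis lt_cardinal : is_cardinal_order lt.
Hypothesis K_uncountable : uncountable K.
Variable phi : K -> (K -> K) -> K.
Hypothesis phi_inj : forall a t a' t', phi a t = phi a' t' ->
  a = a' /\ (forall y, lt y a -> t y = t' y).

Lemma K_inhabited : inhabited K.
Proof.
  apply NNPP. intros HK. apply K_uncountable. exists (fun _ => 0).
  intros x. exfalso. exact (HK (inhabits x)).
Qed.

Definition bottom : K := epsilon K_inhabited (fun m => forall y, ~ lt y m).

Lemma bottom_least y : ~ lt y bottom.
Proof.
  revert y. unfold bottom. apply (epsilon_spec K_inhabited (fun m => forall y, ~ lt y m)).
  destruct K_inhabited as [k].
  destruct (least_exists (fun _ => True) (ex_intro _ k I)) as [m [_ Hm]].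
  exists m. intros y. exact (Hm y I).
Qed.

Lemma bottom_le y : le bottom y.
Proof. apply not_lt_le, bottom_least. Qed.

Lemma exists_other (p q : K) : exists w, w <> p /\ w <> q.
Proof.
  apply NNPP. intros Hno.
  assert (Hpq : forall w, w <> p -> w = q).
  { intros w Hw. apply NNPP. intros Hq. apply Hno. eauto. }
  apply K_uncountable. exists (fun w => if dec (w = p) then 0 else 1).
  intros x y. destruct (dec (x = p)) as [Hx|Hx], (dec (y = p)) as [Hy|Hy];
    intros E; try discriminate.
  - congruence.
  - rewrite (Hpq x Hx), (Hpq y Hy). reflexivity.
Qed.

Definition decode (l v : K) : K -> K :=
  epsilon (inhabits (fun _ => bottom)) (fun t => phi l t = v).

Lemma decode_phi l t y : lt y l -> decode l (phi l t) y = t y.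
Proof.
  intros Hy. unfold decode.
  assert (E : phi l (epsilon (inhabits (fun _ => bottom)) (fun t' => phi l t' = phi l t))
              = phi l t) by (apply epsilon_spec; eauto).
  exact (proj2 (phi_inj _ _ _ _ E) y Hy).
Qed.

(* Cantor's diagonal argument through the coding [phi l]. *)
Lemma code_escapes l (B : K -> K -> Prop) :
  (forall j, lt j l -> exists w, forall v, B j v -> decode l v j <> w) ->
  exists v, forall j, lt j l -> ~ B j v.
Proof.
  intros Hw.
  pose (t := fun j => epsilon K_inhabited (fun w => forall v, B j v -> decode l v j <> w)).
  exists (phi l t). intros j Hj HB.
  apply (epsilon_spec K_inhabited _ (Hw j Hj) (phi l t) HB).
  exact (decode_phi l t j Hj).
Qed.

Lemma exists_gt d : exists g, lt d g.
Proof.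
  apply NNPP. intros Hmax.
  assert (Hle : forall g, le g d).
  { intros g. apply not_lt_le. intros H. apply Hmax. eauto. }
  destruct (classic (exists j, lt j d)) as [[j0 Hj0]|Hmin].
  - destruct (code_escapes d (fun j v => v = j \/ v = d)) as [v Hv].
    { intros j _. destruct (exists_other (decode d j j) (decode d d j)) as [w [Hw1 Hw2]].
      exists w. intros v [-> | ->]; congruence. }
    destruct (Hle v) as [Hvd| ->].
    + exact (Hv v Hvd (or_introl eq_refl)).
    + exact (Hv j0 Hj0 (or_intror eq_refl)).
  - apply K_uncountable. exists (fun _ => 0). intros x y _.
    destruct (Hle x) as [Hx| ->]; [exfalso; eauto|].
    destruct (Hle y) as [Hy| ->]; [exfalso; eauto | reflexivity].
Qed.

Definition succ (d : K) : K :=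
  epsilon K_inhabited (fun g => lt d g /\ forall g', lt d g' -> ~ lt g' g).

Lemma succ_spec d : lt d (succ d) /\ forall g, lt d g -> ~ lt g (succ d).
Proof. exact (epsilon_spec K_inhabited _ (least_exists (lt d) (exists_gt d))). Qed.

Lemma succ_gt d : lt d (succ d).
Proof. apply succ_spec. Qed.

Lemma succ_min d g : lt d g -> le (succ d) g.
Proof. intros H. apply not_lt_le. exact (proj2 (succ_spec d) g H). Qed.

Lemma not_onto_below a (F : K -> K) : exists w, forall v, lt v a -> F v <> w.
Proof.
  apply NNPP. intros Honto.
  assert (Hpre : forall w, exists v, lt v a /\ F v = w).
  { intros w. apply NNPP. intros H. apply Honto. exists w. intros v Hv E. apply H. eauto. }
  apply (lt_cardinal a).
  exists (fun w => epsilon K_inhabited (fun v => lt v a /\ F v = w)). split.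
  - intros w w' E.
    rewrite <- (proj2 (epsilon_spec K_inhabited _ (Hpre w))),
    <- (proj2 (epsilon_spec K_inhabited _ (Hpre w'))).
    rewrite E. reflexivity.
  - intros w. exact (proj1 (epsilon_spec K_inhabited _ (Hpre w))).
Qed.

Lemma regular l (h : K -> K) : exists b, forall j, lt j l -> le (h j) b.
Proof.
  destruct (code_escapes l (fun j v => lt v (h j))) as [b Hb].
  - intros j _. exact (not_onto_below (h j) (fun v => decode l v j)).
  - exists b. intros j Hj. apply not_lt_le. exact (Hb j Hj).
Qed.

Fixpoint finite_ordinal (n : nat) : K :=
  match n with 0 => bottom | S n => succ (finite_ordinal n) end.

Lemma finite_ordinal_lt n m : n < m -> lt (finite_ordinal n) (finite_ordinal m).
Proof. induction 1; [apply succ_gt | exact (lt_trans _ _ _ IHle (succ_gt _))]. Qed.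

Lemma finite_ordinal_inj n m : finite_ordinal n = finite_ordinal m -> n = m.
Proof.
  intros E. destruct (lt_eq_lt_dec n m) as [[H|H]|H]; [|exact H|];
    apply finite_ordinal_lt in H; rewrite E in H; exfalso; exact (lt_irrefl _ H).
Qed.

Lemma le_finite_ordinal n b : le b (finite_ordinal n) -> exists m, b = finite_ordinal m.
Proof.
  induction n as [|n IH]; intros Hb.
  - exists 0. destruct Hb as [Hb|Hb]; [exfalso; exact (bottom_least _ Hb) | exact Hb].
  - destruct (classic (lt (finite_ordinal n) b)) as [H|H].
    + exists (S n). apply le_antisym; [exact Hb | exact (succ_min _ _ H)].
    + exact (IH (not_lt_le _ _ H)).
Qed.

Lemma exists_infinite_ordinal : exists w, forall n, lt (finite_ordinal n) w.
Proof.
  apply NNPP. intros Hno.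
  assert (Hfin : forall b, exists m, b = finite_ordinal m).
  { intros b. apply NNPP. intros Hb. apply Hno. exists b. intros n.
    apply NNPP. intros Hn. apply Hb. exact (le_finite_ordinal n b (not_lt_le _ _ Hn)). }
  apply K_uncountable. exists (fun b => epsilon (inhabits 0) (fun m => b = finite_ordinal m)).
  intros x y E. cbn in E.
  rewrite (epsilon_spec (inhabits 0) _ (Hfin x)), (epsilon_spec (inhabits 0) _ (Hfin y)), E.
  reflexivity.
Qed.

Lemma nat_seq_bounded (s : nat -> K) : exists b, forall n, le (s n) b.
Proof.
  destruct exists_infinite_ordinal as [w Hw].
  pose (index := fun c => epsilon (inhabits 0) (fun n => c = finite_ordinal n)).
  destruct (regular w (fun c => s (index c))) as [b Hb].
  exists b. intros n. specialize (Hb _ (Hw n)). cbn in Hb.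
  replace (index (finite_ordinal n)) with n in Hb; [exact Hb|].
  apply finite_ordinal_inj, (epsilon_spec (inhabits 0) (fun m => finite_ordinal n = finite_ordinal m)).
  exists n. reflexivity.
Qed.

Lemma closed_unbounded_inter C C' :
  closed C -> unbounded C -> closed C' -> unbounded C' -> unbounded (fun c => C c /\ C' c).
Proof.
  intros HC HCu HC' HC'u b.
  pose (nextC := fun c => epsilon K_inhabited (fun c' => lt c c' /\ C c')).
  pose (nextC' := fun c => epsilon K_inhabited (fun c' => lt c c' /\ C' c')).
  assert (HnC : forall c, lt c (nextC c) /\ C (nextC c))
    by (intros c; exact (epsilon_spec K_inhabited _ (HCu c))).
  assert (HnC' : forall c, lt c (nextC' c) /\ C' (nextC' c))
    by (intros c; exact (epsilon_spec K_inhabited _ (HC'u c))).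
  pose (p := fix p n := match n with 0 => nextC b | S n => nextC (nextC' (p n)) end).
  pose (q := fun n => nextC' (p n)).
  assert (Hp : forall n, C (p n)) by (intros [|n]; apply HnC).
  assert (Hq : forall n, C' (q n)) by (intros n; apply HnC').
  assert (Hpq : forall n, lt (p n) (q n)) by (intros n; apply HnC').
  assert (Hqp : forall n, lt (q n) (p (S n))) by (intros n; apply HnC).
  destruct (sup_exists (fun c => exists n, c = p n)) as [s Hs].
  { destruct (nat_seq_bounded p) as [bd Hbd]. exists bd. intros c [n ->]. apply Hbd. }
  assert (Hs' : is_sup (fun c => exists n, c = q n) s).
  { split.
    - intros c [n ->]. left. apply (lt_le_trans _ _ _ (Hqp n)), (proj1 Hs). eauto.
    - intros ub Hub. apply (proj2 Hs). intros c [n ->].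
      left. apply (lt_le_trans _ _ _ (Hpq n)), Hub. eauto. }
  exists s. split; [|split].
  - apply (lt_le_trans _ (p 0)); [apply HnC | apply (proj1 Hs); eauto].
  - refine (closed_sup C _ s HC _ _ Hs); [intros c [n ->]; apply Hp | exists (p 0), 0; reflexivity].
  - refine (closed_sup C' _ s HC' _ _ Hs'); [intros c [n ->]; apply Hq | exists (q 0), 0; reflexivity].
Qed.

(* [phi a t] may depend on [t] above [a]; truncating makes the code depend on
   [t] below [a] only. *)
Definition code (a : K) (t : K -> K) : K :=
  phi a (fun b => if dec (lt b a) then t b else bottom).

Lemma code_local a t t' : basic_open lt a t t' -> code a t' = code a t.
Proof.
  intros H. unfold code. f_equal. extensionality b.
  destruct (dec (lt b a)) as [Hb|_]; [exact (H b Hb) | reflexivity].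
Qed.

Lemma code_inj a t a' t' : code a t = code a' t' -> a = a' /\ basic_open lt a t t'.
Proof.
  intros E. destruct (phi_inj _ _ _ _ E) as [<- Et]. split; [reflexivity|].
  intros y Hy. specialize (Et y Hy). cbn in Et.
  destruct (dec (lt y a)); [symmetry; exact Et | contradiction].
Qed.

Definition one : K := succ bottom.

Lemma bottom_neq_one : bottom <> one.
Proof. intros E. apply (lt_irrefl bottom). rewrite E at 2. apply succ_gt. Qed.

Definition bool_code (b : bool) : K := if b then one else bottom.

Lemma bool_code_inj b b' : bool_code b = bool_code b' -> b = b'.
Proof.
  destruct b, b'; cbn; intros E; try reflexivity; exfalso;
    [exact (bottom_neq_one (eq_sym E)) | exact (bottom_neq_one E)].
Qed.

Definition pair (u v : K) : K := phi (succ one) (fun b => if dec (b = bottom) then u else v).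

Lemma pair_inj u v u' v' : pair u v = pair u' v' -> u = u' /\ v = v'.
Proof.
  intros E. destruct (phi_inj _ _ _ _ E) as [_ H].
  assert (H1 : lt one (succ one)) by apply succ_gt.
  pose proof (H bottom (lt_trans _ _ _ (succ_gt bottom) H1)) as E0.
  pose proof (H one H1) as E1. cbn in E0, E1.
  destruct (dec (bottom = bottom)) as [_|]; [|congruence].
  destruct (dec (one = bottom)) as [E'|_]; [exfalso; exact (bottom_neq_one (eq_sym E'))|].
  split; assumption.
Qed.

Definition unpair (w : K) : K * K :=
  epsilon (inhabits (bottom, bottom)) (fun p => pair (fst p) (snd p) = w).

Lemma unpair_pair u v : unpair (pair u v) = (u, v).
Proof.
  unfold unpair. set (P := fun p : K * K => pair (fst p) (snd p) = pair u v).
  assert (Hp : P (epsilon (inhabits (bottom, bottom)) P)) by (apply epsilon_spec; exists (u, v); reflexivity).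
  destruct (epsilon (inhabits (bottom, bottom)) P) as [u' v'].
  destruct (pair_inj u' v' u v Hp) as [-> ->]. reflexivity.
Qed.

Definition next_point (x : K -> K) (d : K) : K :=
  let e := snd (unpair (x d)) in if dec (lt d e) then e else succ d.

Lemma next_point_gt x d : lt d (next_point x d).
Proof. unfold next_point. destruct (dec _) as [H|_]; [exact H | apply succ_gt]. Qed.

Lemma next_point_local x x' d : x' d = x d -> next_point x' d = next_point x d.
Proof. intros E. unfold next_point. rewrite E. reflexivity. Qed.

Inductive club_of (x : K -> K) : K -> Prop :=
  | club_bottom : club_of x bottom
  | club_next d : club_of x d -> club_of x (next_point x d)
  | club_limit a : (exists c, club_of x c /\ lt c a) ->
      (forall b, lt b a -> exists c, club_of x c /\ lt b c /\ lt c a) -> club_of x a.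

Lemma club_of_closed x : closed (club_of x).
Proof. exact (club_limit x). Qed.

Lemma club_of_local x x' a : basic_open lt a x x' -> club_of x a -> club_of x' a.
Proof.
  revert x'. induction a as [a IH] using (well_founded_ind lt_wf). intros x' Hxx' Ha.
  destruct Ha as [| d Hd | a [c [Hc Hca]] Hcof].
  - apply club_bottom.
  - rewrite <- (next_point_local x x' d (Hxx' d (next_point_gt x d))).
    apply club_next, (IH d (next_point_gt x d)); [|exact Hd].
    exact (basic_open_mono _ _ _ _ (or_introl (next_point_gt x d)) Hxx').
  - apply club_limit.
    + exists c. split; [|exact Hca].
      exact (IH c Hca x' (basic_open_mono _ _ _ _ (or_introl Hca) Hxx') Hc).
    + intros b Hb. destruct (Hcof b Hb) as [c' [Hc' [Hbc' Hc'a]]].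
      exists c'. split; [|auto].
      exact (IH c' Hc'a x' (basic_open_mono _ _ _ _ (or_introl Hc'a) Hxx') Hc').
Qed.

Lemma club_gap x a d : club_of x a -> club_of x d -> lt d a -> ~ lt a (next_point x d).
Proof.
  revert d. induction a as [a IH] using (well_founded_ind lt_wf).
  intros d Ha Hd Hda Hanext.
  destruct Ha as [| d' Hd' | a _ Hcof].
  - exact (bottom_least _ Hda).
  - destruct (lt_trichotomy d' d) as [Hlt|[<-|Hgt]].
    + exact (IH d Hda d' Hd Hd' Hlt Hda).
    + exact (lt_irrefl _ Hanext).
    + exact (IH d' (next_point_gt x d') d Hd' Hd Hgt (lt_trans _ _ _ (next_point_gt x d') Hanext)).
  - destruct (Hcof d Hda) as [c [Hc [Hdc Hca]]].
    exact (IH c Hca d Hc Hd Hdc (lt_trans _ _ _ Hca Hanext)).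
Qed.

Lemma club_of_unbounded x : unbounded (club_of x).
Proof.
  intros b. apply NNPP. intros Hno.
  assert (Hbd : upper_bound (club_of x) b).
  { intros c Hc. apply not_lt_le. intros Hbc. apply Hno. eauto. }
  destruct (sup_exists _ (ex_intro _ b Hbd)) as [s Hs].
  assert (Hcs : club_of x s).
  { apply (closed_sup _ (club_of x) s (club_of_closed x)); [auto | | exact Hs].
    exists bottom. apply club_bottom. }
  exact (le_not_lt _ _ (proj1 Hs _ (club_next x s Hcs)) (next_point_gt x s)).
Qed.

Definition embed (g : K -> bool) (x : K -> K) (a : K) : K :=
  if dec (a = bottom) then fst (unpair (x bottom))
  else if dec (club_of x a) then code a (fun b => pair (bool_code (g b)) (x b))
  else x a.

Lemma embed_bottom g x : embed g x bottom = fst (unpair (x bottom)).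
Proof. unfold embed. destruct (dec (bottom = bottom)); [reflexivity | contradiction]. Qed.

Lemma embed_on_club g x a : a <> bottom -> club_of x a ->
  embed g x a = code a (fun b => pair (bool_code (g b)) (x b)).
Proof.
  intros Ha Hc. unfold embed.
  destruct (dec (a = bottom)); [contradiction|]. destruct (dec (club_of x a)); [reflexivity | contradiction].
Qed.

Lemma embed_off_club g x a : a <> bottom -> ~ club_of x a -> embed g x a = x a.
Proof.
  intros Ha Hc. unfold embed.
  destruct (dec (a = bottom)); [contradiction|]. destruct (dec (club_of x a)); [contradiction | reflexivity].
Qed.

Lemma embed_club_local g x z a : a <> bottom -> club_of x a -> basic_open lt a x z ->
  embed g z a = embed g x a.
Proof.
  intros Ha Hc Hxz.
  rewrite (embed_on_club g x a Ha Hc), (embed_on_club g z a Ha (club_of_local x z a Hxz Hc)).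
  apply code_local. intros b Hb. rewrite (Hxz b Hb). reflexivity.
Qed.

Lemma embed_restrict g a x z : basic_open lt a x z -> basic_open lt a (embed g x) (embed g z).
Proof.
  intros Hxz y Hy.
  assert (Hxz_y : basic_open lt y x z) by exact (basic_open_mono _ _ _ _ (or_introl Hy) Hxz).
  destruct (dec (y = bottom)) as [->|Hy0].
  - rewrite !embed_bottom, (Hxz bottom Hy). reflexivity.
  - destruct (classic (club_of x y)) as [Hc|Hc].
    + exact (embed_club_local g x z y Hy0 Hc Hxz_y).
    + assert (Hcz : ~ club_of z y) by (intros Hcz; exact (Hc (club_of_local z x y (basic_open_sym _ _ _ Hxz_y) Hcz))).
      rewrite (embed_off_club g x y Hy0 Hc), (embed_off_club g z y Hy0 Hcz). exact (Hxz y Hy).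
Qed.

Lemma embed_continuous g : continuous lt (embed g).
Proof.
  intros V HV x HVx. destruct (HV _ HVx) as [a [t [Hxt HtV]]].
  exists a, x. split; [intros y _; reflexivity|].
  intros z Hz. apply HtV. exact (basic_open_trans _ _ _ _ Hxt (embed_restrict g a x z Hz)).
Qed.

Lemma embed_injective g g' x x' : embed g x = embed g' x' -> g = g' /\ x = x'.
Proof.
  intros E.
  assert (Hpt : forall b, g b = g' b /\ x b = x' b).
  { intros b.
    destruct (closed_unbounded_inter _ _ (club_of_closed x) (club_of_unbounded x)
                (club_of_closed x') (club_of_unbounded x') b) as [c [Hbc [Hc Hc']]].
    assert (Hc0 : c <> bottom) by (intros ->; exact (bottom_least _ Hbc)).
    assert (Ec := f_equal (fun y => y c) E). cbn in Ec.
    rewrite (embed_on_club g x c Hc0 Hc), (embed_on_club g' x' c Hc0 Hc') in Ec.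
    destruct (code_inj _ _ _ _ Ec) as [_ Hcode].
    destruct (pair_inj _ _ _ _ (eq_sym (Hcode b Hbc))) as [Eg Ex].
    exact (conj (bool_code_inj _ _ Eg) Ex). }
  split; extensionality b; apply Hpt.
Qed.

Lemma embed_extend g d x d' s :
  club_of x d -> lt d d' -> basic_open lt d (embed g x) s ->
  (d <> bottom -> s d = embed g x d) ->
  exists x', basic_open lt d x x' /\ club_of x' d' /\
    forall z, basic_open lt d' x' z -> basic_open lt d' s (embed g z).
Proof.
  intros Hd Hdd' Hbelow Hat.
  (* x' d proposes d' as the next club point, so embed copies x' = s strictly
     between d and d'. *)
  pose (x' := fun y => if dec (lt y d) then x y else if dec (y = d) then pair (s d) d' else s y).
  assert (Hxx' : basic_open lt d x x').
  { intros y Hy. unfold x'. destruct (dec (lt y d)); [reflexivity | contradiction]. }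
  assert (Hx'd : x' d = pair (s d) d').
  { unfold x'. destruct (dec (lt d d)) as [H|_]; [exfalso; exact (lt_irrefl _ H)|].
    destruct (dec (d = d)); [reflexivity | contradiction]. }
  assert (Hnext : forall z, z d = pair (s d) d' -> next_point z d = d').
  { intros z Hz. unfold next_point. rewrite Hz, unpair_pair. cbn.
    destruct (dec (lt d d')); [reflexivity | contradiction]. }
  exists x'. split; [exact Hxx'|]. split.
  - rewrite <- (Hnext x' Hx'd). exact (club_next x' d (club_of_local x x' d Hxx' Hd)).
  - intros z Hz y Hy.
    assert (Hxz : basic_open lt d x z)
      by exact (basic_open_trans _ _ _ _ Hxx' (basic_open_mono _ _ _ _ (or_introl Hdd') Hz)).
    assert (Hzd : z d = pair (s d) d') by (rewrite (Hz d Hdd'); exact Hx'd).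
    destruct (lt_trichotomy y d) as [Hyd|[->|Hdy]].
    + rewrite (embed_restrict g d x z Hxz y Hyd). symmetry. exact (Hbelow y Hyd).
    + destruct (dec (d = bottom)) as [->|Hd0].
      * rewrite embed_bottom, Hzd, unpair_pair. reflexivity.
      * rewrite (embed_club_local g x z d Hd0 Hd Hxz). symmetry. exact (Hat Hd0).
    + assert (Hy0 : y <> bottom) by (intros ->; exact (bottom_least _ Hdy)).
      assert (Hcz : ~ club_of z y).
      { intros Hcz. apply (club_gap z y d Hcz (club_of_local x z d Hxz Hd) Hdy).
        rewrite (Hnext z Hzd). exact Hy. }
      rewrite (embed_off_club g z y Hy0 Hcz), (Hz y Hy). unfold x'.
      destruct (dec (lt y d)) as [H|_]; [exfalso; exact (lt_irrefl _ (lt_trans _ _ _ H Hdy))|].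
      destruct (dec (y = d)) as [->|_]; [exfalso; exact (lt_irrefl _ Hdy) | reflexivity].
Qed.

Lemma not_closure_avoid M z : ~ closure lt M z -> exists a, forall w, basic_open lt a z w -> ~ M w.
Proof.
  intros Hz. apply NNPP. intros Hno. apply Hz. intros U HU HUz.
  destruct (HU z HUz) as [a [t [Hzt HtU]]].
  apply NNPP. intros HUM. apply Hno. exists a. intros w Hw HMw.
  apply HUM. exists w. split; [|exact HMw].
  exact (HtU w (basic_open_trans _ _ _ _ Hzt Hw)).
Qed.

Lemma nowhere_dense_avoid M : nowhere_dense lt M -> forall c s,
  exists c' s', lt c c' /\ basic_open lt c s s' /\ forall w, basic_open lt c' s' w -> ~ M w.
Proof.
  intros HM c s.
  assert (Hz : exists z, basic_open lt c s z /\ ~ closure lt M z).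
  { apply NNPP. intros Hno. apply (HM _ (basic_open_is_open c s)) with (z := s).
    - intros z Hz. apply NNPP. intros Hcl. apply Hno. eauto.
    - intros y _. reflexivity. }
  destruct Hz as [z [Hsz Hz]].
  destruct (not_closure_avoid M z Hz) as [a Ha].
  destruct (exists_le_both a (succ c)) as [c' [Hac' Hcc']].
  exists c', z. split; [exact (lt_le_trans _ _ _ (succ_gt c) Hcc')|]. split; [exact Hsz|].
  intros w Hw. exact (Ha w (basic_open_mono _ _ _ _ Hac' Hw)).
Qed.

Local Notation cond := (K * (K -> K))%type.

Definition cond_le (p q : cond) := le (fst p) (fst q) /\ basic_open lt (fst p) (snd p) (snd q).

Definition compatible (p q : cond) :=
  forall y, lt y (fst p) -> lt y (fst q) -> snd q y = snd p y.

Lemma cond_le_trans p q r : cond_le p q -> cond_le q r -> cond_le p r.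
Proof.
  intros [Hpq Epq] [Hqr Eqr]. split; [exact (le_trans _ _ _ Hpq Hqr)|].
  exact (basic_open_trans _ _ _ _ Epq (basic_open_mono _ _ _ _ Hpq Eqr)).
Qed.

Lemma cond_le_compatible p q : cond_le p q -> compatible p q.
Proof. intros [_ E] y Hy _. exact (E y Hy). Qed.

Lemma compatible_sym p q : compatible p q -> compatible q p.
Proof. intros H y Hq Hp. symmetry. exact (H y Hp Hq). Qed.

Definition union (D : cond -> Prop) : K -> K :=
  fun y => snd (epsilon (inhabits (bottom, fun _ => bottom)) (fun p => D p /\ lt y (fst p))) y.

Lemma union_extends D : (forall p q, D p -> D q -> compatible p q) ->
  forall p, D p -> basic_open lt (fst p) (snd p) (union D).
Proof.
  intros Hcomp p Hp y Hy. unfold union.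
  destruct (epsilon_spec (inhabits (bottom, fun _ => bottom)) (fun p => D p /\ lt y (fst p))
              (ex_intro _ p (conj Hp Hy))) as [Hq Hyq].
  exact (Hcomp p _ Hp Hq y Hy Hyq).
Qed.

Definition sup_of (D : K -> Prop) : K := epsilon K_inhabited (is_sup D).

Definition lengths (D : cond -> Prop) (c : K) := exists p, D p /\ c = fst p.

Definition glue (D : cond -> Prop) : cond := (sup_of (lengths D), union D).

Lemma glue_le D : (forall p q, D p -> D q -> compatible p q) ->
  (exists b, upper_bound (lengths D) b) -> forall p, D p -> cond_le p (glue D).
Proof.
  intros Hcomp Hb p Hp. split.
  - apply (proj1 (epsilon_spec K_inhabited _ (sup_exists _ Hb))). exists p. auto.
  - exact (union_extends D Hcomp p Hp).
Qed.

(* A construction of length kappa: fewer than kappa conditions are bounded by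
   regularity, their union is again a condition because [good] is closed, and
   stage [j] extends that union so as to force [P j]. *)
Section Fusion.

Variable good : K -> (K -> K) -> Prop.
Hypothesis good_local : forall d x x', basic_open lt d x x' -> good d x -> good d x'.
Hypothesis good_closed : forall x, closed (fun d => good d x).
Variable P : K -> (K -> K) -> Prop.
Hypothesis good_extend : forall j d x, good d x -> exists d' x',
  lt d d' /\ good d' x' /\ basic_open lt d x x' /\ forall z, basic_open lt d' x' z -> P j z.
Variables (d0 : K) (x0 : K -> K).
Hypothesis good0 : good d0 x0.

Lemma glue_good D : (exists p, D p) -> (forall p q, D p -> D q -> compatible p q) ->
  (exists b, upper_bound (lengths D) b) -> (forall p, D p -> good (fst p) (snd p)) ->
  good (fst (glue D)) (snd (glue D)).
Proof.
  intros [p0 Hp0] Hcomp Hb Hgood.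
  refine (closed_sup _ (lengths D) _ (good_closed (union D)) _ _ (epsilon_spec K_inhabited _ (sup_exists _ Hb))).
  - intros c [p [Hp ->]]. exact (good_local _ _ _ (union_extends D Hcomp p Hp) (Hgood p Hp)).
  - exists (fst p0), p0. auto.
Qed.

Definition forces j (q : cond) := forall z, basic_open lt (fst q) (snd q) z -> P j z.

Definition step (j : K) (p : cond) : cond :=
  epsilon (inhabits p) (fun q => cond_le p q /\ good (fst q) (snd q) /\ forces j q).

Lemma step_spec j p : good (fst p) (snd p) ->
  cond_le p (step j p) /\ good (fst (step j p)) (snd (step j p)) /\ forces j (step j p).
Proof.
  intros Hp. destruct (good_extend j _ _ Hp) as [d' [x' [Hlt [Hg [Hext Hf]]]]].
  apply (epsilon_spec (inhabits p) (fun q => cond_le p q /\ good (fst q) (snd q) /\ forces j q)).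
  exists (d', x'). split; [split; [left|]|]; auto.
Qed.

Definition family (f : K -> cond) (I : K -> Prop) (p : cond) :=
  p = (d0, x0) \/ exists i, I i /\ p = f i.

Definition stage (f : K -> cond) (j : K) : cond := step j (glue (family f (fun i => lt i j))).

Lemma stage_local f f' j : (forall i, lt i j -> f i = f' i) -> stage f j = stage f' j.
Proof.
  intros Hff'. unfold stage.
  replace (family f (fun i => lt i j)) with (family f' (fun i => lt i j)); [reflexivity|].
  extensionality p. apply propositional_extensionality. unfold family.
  split; intros [H|[i [Hi ->]]]; auto; right; exists i; rewrite Hff'; auto.
Qed.

Section Chain.

Variable S : K -> cond.
Hypothesis S_stage : forall j, S j = stage S j.

Definition valid j := good (fst (S j)) (snd (S j)) /\ forces j (S j) /\
  forall p, family S (fun i => lt i j) p -> cond_le p (S j).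

Lemma family_compatible I : (forall i, I i -> valid i) ->
  forall p q, family S I p -> family S I q -> compatible p q.
Proof.
  intros Hvalid.
  assert (H0 : forall i, I i -> compatible (d0, x0) (S i)).
  { intros i Hi. apply cond_le_compatible, (proj2 (proj2 (Hvalid i Hi))). left. reflexivity. }
  assert (HS : forall i i', I i' -> lt i i' -> compatible (S i) (S i')).
  { intros i i' Hi' Hii'. apply cond_le_compatible, (proj2 (proj2 (Hvalid i' Hi'))). right. eauto. }
  intros p q [->|[i [Hi ->]]] [->|[i' [Hi' ->]]].
  - intros y _ _. reflexivity.
  - auto.
  - apply compatible_sym. auto.
  - destruct (lt_trichotomy i i') as [H|[<-|H]];
      [auto | intros y _ _; reflexivity | apply compatible_sym; auto].
Qed.

Lemma family_bounded j : exists b, upper_bound (lengths (family S (fun i => lt i j))) b.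
Proof.
  destruct (regular j (fun i => fst (S i))) as [b Hb].
  destruct (exists_le_both b d0) as [c [Hbc Hd0c]].
  exists c. intros l [p [[->|[i [Hi ->]]] ->]]; [exact Hd0c|].
  exact (le_trans _ _ _ (Hb i Hi) Hbc).
Qed.

Lemma valid_all j : valid j.
Proof.
  induction j as [j IH] using (well_founded_ind lt_wf).
  set (D := family S (fun i => lt i j)).
  assert (Hcomp := family_compatible _ IH).
  assert (Hgood : forall p, D p -> good (fst p) (snd p)).
  { intros p [->|[i [Hi ->]]]; [exact good0 | exact (proj1 (IH i Hi))]. }
  assert (HD : exists p, D p) by (exists (d0, x0); left; reflexivity).
  destruct (step_spec j (glue D) (glue_good D HD Hcomp (family_bounded j) Hgood))
    as [Hle [Hg Hf]].
  unfold valid. rewrite S_stage. fold D.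
  split; [exact Hg|]. split; [exact Hf|].
  intros p Hp. exact (cond_le_trans _ _ _ (glue_le D Hcomp (family_bounded j) p Hp) Hle).
Qed.

Lemma chain_union : exists x, basic_open lt d0 x0 x /\ forall j, P j x.
Proof.
  set (D := family S (fun _ => True)).
  assert (Hcomp : forall p q, D p -> D q -> compatible p q)
    by (apply family_compatible; intros i _; apply valid_all).
  exists (union D). split.
  - exact (union_extends D Hcomp (d0, x0) (or_introl eq_refl)).
  - intros j. apply (proj1 (proj2 (valid_all j))).
    apply (union_extends D Hcomp). right. exists j. auto.
Qed.

End Chain.

Lemma fusion : exists x, basic_open lt d0 x0 x /\ forall j, P j x.
Proof.
  destruct (wf_recursion (d0, x0) stage stage_local) as [S HS].
  exact (chain_union S HS).
Qed.

End Fusion.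

Lemma embed_extend_avoiding g M : nowhere_dense lt M -> forall d x, club_of x d ->
  exists d' x', lt d d' /\ club_of x' d' /\ basic_open lt d x x' /\
    forall z, basic_open lt d' x' z -> ~ M (embed g z).
Proof.
  intros HM d x Hd.
  destruct (nowhere_dense_avoid M HM (succ d) (embed g x)) as [d' [s [Hd' [Hs HsM]]]].
  assert (Hdd' : lt d d') by exact (lt_trans _ _ _ (succ_gt d) Hd').
  destruct (embed_extend g d x d' s Hd Hdd') as [x' [Hxx' [Hx' Hforce]]].
  - exact (basic_open_mono _ _ _ _ (or_introl (succ_gt d)) Hs).
  - intros _. exact (Hs d (succ_gt d)).
  - exists d', x'. split; [exact Hdd'|]. split; [exact Hx'|]. split; [exact Hxx'|].
    intros z Hz. exact (HsM _ (Hforce z Hz)).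
Qed.

Lemma embed_generic g a t (N : K -> set (K -> K)) : (forall j, nowhere_dense lt (N j)) ->
  exists x, basic_open lt a t (embed g x) /\ forall j, ~ N j (embed g x).
Proof.
  intros HN.
  destruct (embed_extend g bottom (fun _ => bottom) (succ a) t (club_bottom _)
              (le_lt_trans _ _ _ (bottom_le a) (succ_gt a))) as [x1 [_ [Hx1 Hforce1]]].
  - intros y Hy. exfalso. exact (bottom_least _ Hy).
  - intros H. contradiction.
  - destruct (fusion (fun d x => club_of x d) (fun d x x' => club_of_local x x' d) club_of_closed
                (fun j z => ~ N j (embed g z)) (fun j => embed_extend_avoiding g (N j) (HN j))
                (succ a) x1 Hx1) as [x [Hx Hgen]].
    exists x. split; [|exact Hgen].
    exact (basic_open_mono _ _ _ _ (or_introl (succ_gt a)) (Hforce1 x Hx)).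
Qed.

Lemma baire_set_not_between g g' X : kappa_Baire lt X ->
  (forall x, X (embed g x)) -> (forall x, ~ X (embed g' x)) -> False.
Proof.
  intros [U [N [HU [HN Hdiff]]]] Hg Hg'.
  destruct (classic (exists u, U u)) as [[u Hu]|HU0].
  - destruct (HU u Hu) as [a [t [_ HtU]]].
    destruct (embed_generic g' a t N HN) as [x [Hx Hgen]].
    destruct (Hdiff (embed g' x)) as [j Hj]; [|exact (Hgen j Hj)].
    right. exact (conj (HtU _ Hx) (Hg' x)).
  - destruct (embed_generic g bottom (fun _ => bottom) N HN) as [x [_ Hgen]].
    destruct (Hdiff (embed g x)) as [j Hj]; [|exact (Hgen j Hj)].
    left. split; [exact (Hg x) | intros Hu; exact (HU0 (ex_intro _ _ Hu))].
Qed.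

End Kappa.
End GeneralizedBaireSpace.


Theorem theorem1p8 (K : Type) (lt : K -> K -> Prop)
  (Hwo : strict_well_order lt) (Hcard : is_cardinal_order lt)
  (Hunc : uncountable K) (Hkk : kappa_lt_kappa_le_kappa lt) :
  exists A : (K -> bool) -> set (K -> K),
    (forall g d, g <> d -> forall x, A g x -> ~ A d x) /\
    (forall g, exists f : (K -> K) -> (K -> K),
        continuous lt f /\ (forall x y, f x = f y -> x = y) /\
        (forall y, A g y <-> exists x, f x = y)) /\
    (forall g d, g <> d ->
        ~ exists X : set (K -> K), kappa_Baire lt X /\
            (forall x, A g x -> X x) /\ (forall x, X x -> ~ A d x)).
Proof.
  destruct Hkk as [phi Hphi].
  pose proof (embed_injective K lt Hwo Hcard Hunc phi Hphi) as Hinj.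
  exists (fun g y => exists x, embed K lt Hunc phi g x = y). split; [|split].
  - intros g d Hgd y [x <-] [x' Ex']. apply Hgd.
    exact (proj1 (Hinj g d x x' (eq_sym Ex'))).
  - intros g. exists (embed K lt Hunc phi g). split; [|split].
    + exact (embed_continuous K lt Hwo Hunc phi Hphi g).
    + intros x y E. exact (proj2 (Hinj g g x y E)).
    + intros y. reflexivity.
  - intros g d _ [X [HX [HgX HdX]]].
    apply (baire_set_not_between K lt Hwo Hcard Hunc phi Hphi g d X HX).
    + intros x. apply HgX. exists x. reflexivity.
    + intros x HXx. exact (HdX _ HXx (ex_intro _ x eq_refl)).
Qed.
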